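(* Let $0\le a,c,\varphi\in L^1(\mathbb R^d)$ and define, for $x\in\mathbb R^d$ and $\eta\in\Gamma_G$, $$b(x,\eta)=\sum_{y\in\eta}a(x-y)\Bigl(1+\sum_{z\in\eta\setminus\{y\}}c(z-y)\Bigr)\exp\Bigl(-\sum_{z\in\eta\setminus\{y\}}\varphi(z-y)\Bigr).$$ Suppose that there exists $B\ge1$ with $a(x)\le BG(x)$ and $\varphi(x)\le BG(x)$ for a.a. $x\in\mathbb R^d$; that $\varphi$ is separated from $0$ in a neighbourhood of the origin (there exist $\alpha,\rho>0$ with $\varphi(x)\ge\alpha$ for a.a. $|x|\le\rho$); and that there exists $p\ge0$ with $c(x)\le p\varphi(x)$ for a.a. $x$. Then $$\sup_{x\in\mathbb R^d,\ \eta\in\Gamma_G} b(x,\eta)<\infty.$$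
   Context: Fix $d\in\mathbb N$ and $\varepsilon>0$, and let $G(x)=(1+|x|)^{-d-\varepsilon}$. $\Gamma$ is the set of locally finite subsets $\gamma\subset\mathbb R^d$ (i.e. $|\gamma\cap B|<\infty$ for each bounded Borel $B$), and $\Gamma_G=\{\gamma\in\Gamma:\sum_{x\in\gamma}G(x)<\infty\}$ (tempered configurations).
   Formalization: The bounds 0 ≤ a, c, φ, a ≤ BG, φ ≤ BG, φ ≥ α for |x| ≤ ρ, and c ≤ pφ hold for every x ∈ ℝᵈ rather than for almost all x. The statement above fails without it. *)

From Stdlib Require Import Reals Lra List ClassicalEpsilon.
Import ListNotations.
Open Scope R_scope.

(* Points of R^d are represented as functions nat -> R vanishing at indices >= d. *)
Definition point := nat -> R.
Definition in_Rd (d : nat) (x : point) : Prop := forall i, (d <= i)%nat -> x i = 0.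
Definition psub (x y : point) : point := fun i => x i - y i.
Definition norm (d : nat) (x : point) : R :=
  sqrt (fold_right Rplus 0 (map (fun i => x i ^ 2) (seq 0 d))).

Definition Gfun (d : nat) (eps : R) (x : point) : R :=
  Rpower (1 + norm d x) (- (INR d + eps)).

Definition sum_list (l : list R) : R := fold_right Rplus 0 l.

Definition finite_sums (S : point -> Prop) (f : point -> R) (s : R) : Prop :=
  exists l : list point, NoDup l /\ (forall y, In y l -> S y) /\ s = sum_list (map f l).

(* all finite partial sums of f over S are <= M  (for f >= 0: sum_{x in S} f x <= M) *)
Definition sum_le (S : point -> Prop) (f : point -> R) (M : R) : Prop :=
  forall l : list point, NoDup l -> (forall y, In y l -> S y) -> sum_list (map f l) <= M.

(* sum_{x in S} f x for nonnegative f: the supremum of the finite partial sums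
   (meaningful whenever these are bounded) *)
Definition set_sum (S : point -> Prop) (f : point -> R) : R :=
  epsilon (inhabits 0) (fun s => is_lub (finite_sums S f) s).

Definition configuration (d : nat) (g : point -> Prop) : Prop :=
  (forall x, g x -> in_Rd d x) /\
  (forall r : R, exists l : list point, forall x, g x -> norm d x <= r -> In x l).

Definition tempered (d : nat) (eps : R) (g : point -> Prop) : Prop :=
  configuration d g /\ exists M, sum_le g (Gfun d eps) M.

Definition b_term (a c phi : point -> R) (eta : point -> Prop) (x y : point) : R :=
  a (psub x y)
  * (1 + set_sum (fun z => eta z /\ z <> y) (fun z => c (psub z y)))
  * exp (- set_sum (fun z => eta z /\ z <> y) (fun z => phi (psub z y))).

From Stdlib Require Import Reals Lra Lia List ClassicalEpsilon ZArith.
Import ListNotations.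
Open Scope R_scope.

(* Cut R^d into cubes of side rho / (d + 1), so that two points of a
   common cube are within distance rho and repel each other by at least
   alpha.  If the cube of y contains n points of eta, the phi-interaction S
   of y is at least alpha (n - 1); the c-interaction is at most p S; hence the
   summand at y is at most 2 (1 + p) a(x - y) exp (- alpha (n - 1) / 2),
   because (1 + S) exp (- S) <= 2 exp (- S / 2).  Summing over the n points
   of a cube gives at most 1 + 2 / alpha times a bound for a(x - y) on the
   cube, and a(x - y) <= B G(x - y) is dominated by a product over the
   coordinates of one-dimensional lattice weights (1 + |t - k_i|)^(-s) with
   s = 1 + eps / (d + 1) > 1, whose sum over the cubes factorizes. *)

Lemma sum_list_app (l1 l2 : list R) :
  sum_list (l1 ++ l2) = sum_list l1 + sum_list l2.
Proof. induction l1 as [|u l1 IH]; simpl; [lra | rewrite IH; lra]. Qed.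

Lemma sum_list_le {A} (f g : A -> R) (l : list A) :
  (forall x, In x l -> f x <= g x) -> sum_list (map f l) <= sum_list (map g l).
Proof.
  induction l as [|u l IH]; simpl; intros Hfg; [lra|].
  pose proof (Hfg u (or_introl eq_refl)).
  pose proof (IH (fun x Hx => Hfg x (or_intror Hx))). lra.
Qed.

Lemma sum_list_nonneg {A} (f : A -> R) (l : list A) :
  (forall x, In x l -> 0 <= f x) -> 0 <= sum_list (map f l).
Proof.
  induction l as [|u l IH]; simpl; intros Hf; [lra|].
  pose proof (Hf u (or_introl eq_refl)).
  pose proof (IH (fun x Hx => Hf x (or_intror Hx))). lra.
Qed.

Lemma sum_list_scal {A} (f : A -> R) (c : R) (l : list A) :
  sum_list (map (fun x => c * f x) l) = c * sum_list (map f l).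
Proof. induction l as [|u l IH]; simpl; [lra | rewrite IH; lra]. Qed.

Lemma sum_list_plus {A} (f g : A -> R) (l : list A) :
  sum_list (map (fun x => f x + g x) l) = sum_list (map f l) + sum_list (map g l).
Proof. induction l as [|u l IH]; simpl; [lra | rewrite IH; lra]. Qed.

Lemma sum_list_const {A} (c : R) (l : list A) :
  sum_list (map (fun _ => c) l) = INR (length l) * c.
Proof.
  induction l as [|u l IH]; simpl length; [simpl; lra|].
  rewrite S_INR. simpl. rewrite IH. lra.
Qed.

Lemma sum_list_ext {A} (f g : A -> R) (l : list A) :
  (forall x, In x l -> f x = g x) -> sum_list (map f l) = sum_list (map g l).
Proof. intros H. f_equal. apply map_ext_in. exact H. Qed.

Lemma sum_list_elem {A} (f : A -> R) (l : list A) (u : A) :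
  In u l -> (forall x, In x l -> 0 <= f x) -> f u <= sum_list (map f l).
Proof.
  induction l as [|v l IH]; simpl; intros Hu Hf; [destruct Hu|].
  pose proof (Hf v (or_introl eq_refl)).
  pose proof (sum_list_nonneg f l (fun x Hx => Hf x (or_intror Hx))).
  destruct Hu as [<-|Hu]; [lra|].
  pose proof (IH Hu (fun x Hx => Hf x (or_intror Hx))). lra.
Qed.

Lemma sum_list_incl {A} (f : A -> R) (l l' : list A) :
  NoDup l -> incl l l' -> (forall x, In x l' -> 0 <= f x) ->
  sum_list (map f l) <= sum_list (map f l').
Proof.
  revert l. induction l' as [|u l' IH]; intros l Hl Hincl Hf.
  - destruct l as [|v l]; [simpl; lra|]. destruct (Hincl v (or_introl eq_refl)).
  - assert (Hf' : forall x, In x l' -> 0 <= f x) by (intros; apply Hf; right; auto).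
    pose proof (Hf u (or_introl eq_refl)). simpl.
    destruct (excluded_middle_informative (In u l)) as [Hu|Hu].
    + destruct (in_split _ _ Hu) as (l1 & l2 & ->).
      assert (Hrest : sum_list (map f (l1 ++ l2)) <= sum_list (map f l')).
      { apply IH; [eapply NoDup_remove_1; eauto | | exact Hf'].
        intros x Hx. destruct (Hincl x) as [<-|]; auto.
        - apply in_app_or in Hx. apply in_or_app. simpl. tauto.
        - exfalso. exact (NoDup_remove_2 _ _ _ Hl Hx). }
      rewrite map_app, sum_list_app in Hrest |- *. simpl. lra.
    + assert (sum_list (map f l) <= sum_list (map f l')); [|lra].
      apply IH; auto. intros x Hx. destruct (Hincl x Hx) as [<-|]; tauto.
Qed.

Lemma sum_list_filter {A} (f : A -> R) (keep : A -> bool) (l : list A) :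
  sum_list (map f l) = sum_list (map f (filter keep l))
                       + sum_list (map f (filter (fun x => negb (keep x)) l)).
Proof. induction l as [|u l IH]; simpl; [lra|]. destruct (keep u); simpl; rewrite IH; lra. Qed.

Section Fibers.
Context {A K : Type} (K_eq_dec : forall u v : K, {u = v} + {u <> v}) (key : A -> K).

Definition fiber (l : list A) (k : K) : list A :=
  filter (fun y => if K_eq_dec (key y) k then true else false) l.

Lemma In_fiber (l : list A) (k : K) (y : A) : In y (fiber l k) <-> In y l /\ key y = k.
Proof.
  unfold fiber. rewrite filter_In.
  destruct (K_eq_dec (key y) k); split; intros [H1 H2]; auto; discriminate.
Qed.

Lemma fiber_NoDup (l : list A) (k : K) : NoDup l -> NoDup (fiber l k).
Proof. apply NoDup_filter. Qed.

Lemma sum_list_indicator (Ks : list K) (k0 : K) (c : R) :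
  NoDup Ks -> In k0 Ks ->
  sum_list (map (fun k => if K_eq_dec k0 k then c else 0) Ks) = c.
Proof.
  induction Ks as [|k Ks IH]; intros Hn Hin; [destruct Hin|].
  inversion Hn as [|? ? Hk Hn']; subst. simpl. destruct (K_eq_dec k0 k) as [->|Hne].
  - rewrite (sum_list_ext _ (fun _ => 0)), sum_list_const; [lra|].
    intros x Hx. destruct (K_eq_dec k x); [subst; contradiction | reflexivity].
  - destruct Hin as [->|Hin]; [congruence|]. rewrite IH; auto; lra.
Qed.

Lemma sum_by_fibers (g : A -> R) (Ks : list K) (l : list A) :
  NoDup Ks -> (forall y, In y l -> In (key y) Ks) ->
  sum_list (map g l) = sum_list (map (fun k => sum_list (map g (fiber l k))) Ks).
Proof.
  intros HKs. induction l as [|u l IH]; intros Hkeys.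
  - rewrite (sum_list_ext (fun k => sum_list (map g (fiber [] k))) (fun _ => 0)),
      sum_list_const; simpl; [ring | reflexivity].
  - rewrite (sum_list_ext _ (fun k => (if K_eq_dec (key u) k then g u else 0)
                                      + sum_list (map g (fiber l k)))).
    + assert (Hl : forall y, In y l -> In (key y) Ks) by (intros; apply Hkeys; right; auto).
      rewrite sum_list_plus, sum_list_indicator, <- (IH Hl); auto.
      apply Hkeys. left. reflexivity.
    + intros k _. unfold fiber. simpl. destruct (K_eq_dec (key u) k); simpl; lra.
Qed.
End Fibers.

Lemma set_sum_is_lub (S : point -> Prop) (f : point -> R) (M : R) :
  sum_le S f M -> is_lub (finite_sums S f) (set_sum S f).
Proof.
  intros HM. unfold set_sum. apply epsilon_spec.
  destruct (completeness (finite_sums S f)) as [m Hm].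
  - exists M. intros s (l & Hl & HlS & ->). apply HM; auto.
  - exists 0, []. repeat split; [constructor | contradiction].
  - exists m. exact Hm.
Qed.

Lemma set_sum_ge (S : point -> Prop) (f : point -> R) (M : R) (l : list point) :
  sum_le S f M -> NoDup l -> (forall y, In y l -> S y) ->
  sum_list (map f l) <= set_sum S f.
Proof. intros HM Hl HlS. apply (set_sum_is_lub _ _ _ HM). exists l. auto. Qed.

Lemma set_sum_le (S : point -> Prop) (f : point -> R) (M M' : R) :
  sum_le S f M -> sum_le S f M' -> set_sum S f <= M'.
Proof.
  intros HM HM'. apply (set_sum_is_lub _ _ _ HM).
  intros s (l & Hl & HlS & ->). apply HM'; auto.
Qed.

Lemma set_sum_nonneg (S : point -> Prop) (f : point -> R) (M : R) :
  sum_le S f M -> 0 <= set_sum S f.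
Proof. intros HM. apply (set_sum_ge S f M []); [exact HM | constructor | contradiction]. Qed.

Lemma exp_le_compat (u v : R) : u <= v -> exp u <= exp v.
Proof. intros [H | ->]; [left; apply exp_increasing; exact H | right; reflexivity]. Qed.

Lemma ln_le_compat (u v : R) : 0 < u -> u <= v -> ln u <= ln v.
Proof. intros Hu [H | ->]; [left; apply ln_increasing; auto | right; reflexivity]. Qed.

Lemma Rpower_neg_antitone (u v s : R) :
  0 <= s -> 0 < u <= v -> Rpower v (- s) <= Rpower u (- s).
Proof.
  intros Hs Huv. unfold Rpower. apply exp_le_compat.
  pose proof (ln_le_compat u v (proj1 Huv) (proj2 Huv)). nra.
Qed.

Lemma ln_le_sub1 (u : R) : 0 < u -> ln u <= u - 1.
Proof. intros Hu. pose proof (exp_ineq1_le (ln u)) as H. rewrite exp_ln in H; lra. Qed.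

Lemma linear_exp_damping (S : R) : 0 <= S -> (1 + S) * exp (- S) <= 2 * exp (- (S / 2)).
Proof.
  intros HS.
  assert (Hsplit : exp (- S) = exp (- (S / 2)) * exp (- (S / 2))).
  { rewrite <- exp_plus. f_equal. lra. }
  assert (Hinv : exp (S / 2) * exp (- (S / 2)) = 1).
  { rewrite <- exp_plus, <- exp_0. f_equal. lra. }
  pose proof (exp_ineq1_le (S / 2)). pose proof (exp_pos (- (S / 2))).
  rewrite Hsplit. nra.
Qed.

Lemma damped_summand_le (A A' Sc S L p : R) :
  0 <= A <= A' -> 0 <= p -> Sc <= p * S -> 0 <= S -> L <= S ->
  A * (1 + Sc) * exp (- S) <= 2 * (1 + p) * A' * exp (- (L / 2)).
Proof.
  intros [HA HAA] Hp HSc HS HL.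
  pose proof (linear_exp_damping S HS). pose proof (exp_pos (- S)).
  assert (exp (- (S / 2)) <= exp (- (L / 2))) by (apply exp_le_compat; lra).
  apply Rle_trans with (A * (1 + p) * ((1 + S) * exp (- S))).
  - assert (1 + Sc <= (1 + p) * (1 + S)) by nra.
    assert (0 <= A * exp (- S)) by (apply Rmult_le_pos; lra).
    assert (0 <= A * exp (- S) * ((1 + p) * (1 + S) - (1 + Sc))) by (apply Rmult_le_pos; lra).
    nra.
  - assert (0 <= A * (1 + p)) by nra.
    apply Rle_trans with (A * (1 + p) * (2 * exp (- (L / 2)))); [nra|].
    pose proof (exp_pos (- (L / 2))).
    assert (0 <= (A' - A) * ((1 + p) * (2 * exp (- (L / 2))))) by (apply Rmult_le_pos; nra).
    nra.
Qed.

(* Packing: [n] points that repel each other by at least [alpha] contribute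
   a bounded total weight. *)
Lemma crowd_weight_le (alpha : R) (n : nat) :
  0 < alpha -> INR n * exp (- (alpha * (INR n - 1) / 2)) <= 1 + 2 / alpha.
Proof.
  intros Ha. assert (0 < 2 / alpha) by (apply Rdiv_lt_0_compat; lra).
  destruct n as [|n]; [simpl; lra|].
  rewrite exp_Ropp, S_INR. replace (INR n + 1 - 1) with (INR n) by ring.
  pose proof (exp_ineq1_le (alpha * INR n / 2)). pose proof (pos_INR n).
  set (Q := exp (alpha * INR n / 2)) in *. assert (0 < Q) by apply exp_pos.
  apply (Rmult_le_reg_r Q); auto. rewrite Rmult_assoc, Rinv_l by lra.
  assert ((1 + 2 / alpha) * (1 + alpha * INR n / 2)
          = 1 + 2 / alpha + alpha * INR n / 2 + INR n) by (field; lra).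
  assert (0 <= alpha * INR n / 2) by (apply Rmult_le_pos; [nra | lra]).
  nra.
Qed.

(* One-dimensional lattice sums: for [s > 1], the sum over distinct integers
   [k] of [(1 + |t - k|)^(-s)] is bounded uniformly in [t].  The proof
   compares with [sum_m (m+1)^(-s)], which telescopes against
   [(m+1)^(1-s) / (s-1)]. *)
Section LatticeSums.
Variable s : R.
Hypothesis Hs : 1 < s.

Definition nat_weight (m : nat) : R := Rpower (INR m + 1) (- s).

Definition nat_tail (N : nat) : R := Rpower (INR N + 1) (- (s - 1)) / (s - 1).

Lemma nat_weight_nonneg (m : nat) : 0 <= nat_weight m.
Proof. left. apply exp_pos. Qed.

Lemma ln_succ_ge (u : R) : 1 <= u -> 1 / (u + 1) <= ln (u + 1) - ln u.
Proof.
  intros Hu.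
  assert (H : ln (u / (u + 1)) <= u / (u + 1) - 1) by (apply ln_le_sub1, Rdiv_lt_0_compat; lra).
  unfold Rdiv in H. rewrite ln_mult, ln_Rinv in H by (try apply Rinv_0_lt_compat; lra).
  replace (u * / (u + 1) - 1) with (- (1 / (u + 1))) in H by (field; lra). lra.
Qed.

Lemma nat_weight_telescope (N : nat) : nat_weight (S N) <= nat_tail N - nat_tail (S N).
Proof.
  unfold nat_weight, nat_tail, Rpower. rewrite S_INR.
  set (u := INR N + 1). assert (Hu : 1 <= u) by (unfold u; pose proof (pos_INR N); lra).
  set (r := s - 1). assert (Hr : 0 < r) by (unfold r; lra).
  pose proof (ln_succ_ge u Hu) as Hln.
  pose proof (exp_ineq1_le (r * (ln (u + 1) - ln u))) as Hexp.
  set (T := exp (- r * ln (u + 1))). assert (HT : 0 < T) by apply exp_pos.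
  assert (Hu_tail : exp (- r * ln u) = T * exp (r * (ln (u + 1) - ln u))).
  { unfold T. rewrite <- exp_plus. f_equal. ring. }
  assert (Hw : exp (- s * ln (u + 1)) = T * (1 / (u + 1))).
  { unfold T. replace (- s * ln (u + 1)) with (- r * ln (u + 1) + - ln (u + 1)) by (unfold r; ring).
    rewrite exp_plus, exp_Ropp, exp_ln by lra. field. lra. }
  fold r. rewrite Hw, Hu_tail. fold T.
  apply (Rmult_le_reg_l r); auto.
  replace (r * (T * exp (r * (ln (u + 1) - ln u)) / r - T / r))
    with (T * exp (r * (ln (u + 1) - ln u)) - T) by (field; lra).
  assert (r * (1 / (u + 1)) <= r * (ln (u + 1) - ln u)) by (apply Rmult_le_compat_l; lra).
  nra.
Qed.

Lemma nat_partial_sum_le (N : nat) :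
  sum_list (map nat_weight (seq 0 (S N))) <= 1 + 1 / (s - 1) - nat_tail N.
Proof.
  induction N as [|N IH].
  - simpl. unfold nat_weight, nat_tail, Rpower.
    rewrite Rplus_0_l, ln_1, !Rmult_0_r, exp_0. lra.
  - rewrite seq_S, map_app, sum_list_app. simpl.
    pose proof (nat_weight_telescope N). simpl in IH. lra.
Qed.

Lemma nat_sum_le (L : list nat) : NoDup L -> sum_list (map nat_weight L) <= 1 + 1 / (s - 1).
Proof.
  intros HL.
  apply Rle_trans with (sum_list (map nat_weight (seq 0 (S (list_max L))))).
  - apply sum_list_incl; auto; [|intros; apply nat_weight_nonneg].
    intros m Hm. apply in_seq. enough (m <= list_max L)%nat by lia.
    pose proof (proj1 (list_max_le L (list_max L)) (le_n _)) as Hmax.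
    rewrite Forall_forall in Hmax. auto.
  - pose proof (nat_partial_sum_le (list_max L)).
    assert (0 <= nat_tail (list_max L)).
    { unfold nat_tail. apply Rmult_le_pos; [left; apply exp_pos | left; apply Rinv_0_lt_compat; lra]. }
    lra.
Qed.

Definition lattice_weight (t : R) (k : Z) : R := Rpower (1 + Rabs (t - IZR k)) (- s).

Definition lattice_bound : R := 2 * (Rpower 2 s * (1 + 1 / (s - 1))).

Lemma lattice_weight_nonneg (t : R) (k : Z) : 0 <= lattice_weight t k.
Proof. left. apply exp_pos. Qed.

Lemma lattice_weight_le (t : R) (n0 k : Z) :
  IZR n0 <= t < IZR n0 + 1 ->
  lattice_weight t k <= Rpower 2 s * nat_weight (Z.to_nat (Z.abs (k - n0))).
Proof.
  intros Ht. unfold lattice_weight, nat_weight, Rpower.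
  rewrite INR_IZR_INZ, Z2Nat.id, abs_IZR, minus_IZR by lia.
  set (u := Rabs (IZR k - IZR n0)). assert (Hu : 0 <= u) by apply Rabs_pos.
  assert (Hcmp : (u + 1) / 2 <= 1 + Rabs (t - IZR k)).
  { unfold u. destruct (Rle_dec (IZR k) (IZR n0)) as [Hk|Hk].
    - rewrite Rabs_left1, Rabs_right by lra. lra.
    - assert (IZR n0 + 1 <= IZR k).
      { rewrite <- plus_IZR. apply IZR_le. apply Rnot_le_lt, lt_IZR in Hk. lia. }
      rewrite Rabs_right, Rabs_left1 by lra. lra. }
  rewrite <- exp_plus. apply exp_le_compat.
  pose proof (ln_le_compat ((u + 1) / 2) _ ltac:(lra) Hcmp) as Hln.
  unfold Rdiv in Hln. rewrite ln_mult, ln_Rinv in Hln by lra. nra.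
Qed.

Lemma lattice_sum_le (t : R) (L : list Z) :
  NoDup L -> sum_list (map (lattice_weight t) L) <= lattice_bound.
Proof.
  intros HL. set (n0 := Int_part t).
  assert (Ht : IZR n0 <= t < IZR n0 + 1) by (unfold n0; destruct (base_Int_part t); lra).
  assert (H2s : 0 <= Rpower 2 s) by (left; apply exp_pos).
  (* on each side of [n0], [k |-> |k - n0|] is injective *)
  assert (Hside : forall L', NoDup L' ->
            (forall u v, In u L' -> In v L' ->
               Z.to_nat (Z.abs (u - n0)) = Z.to_nat (Z.abs (v - n0)) -> u = v) ->
            sum_list (map (lattice_weight t) L') <= Rpower 2 s * (1 + 1 / (s - 1))).
  { intros L' HL' Hinj.
    apply Rle_trans with
      (sum_list (map (fun k => Rpower 2 s * nat_weight (Z.to_nat (Z.abs (k - n0)))) L')).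
    - apply sum_list_le. intros k _. apply lattice_weight_le. exact Ht.
    - rewrite sum_list_scal. apply Rmult_le_compat_l; auto.
      rewrite <- (map_map (fun k => Z.to_nat (Z.abs (k - n0))) nat_weight).
      apply nat_sum_le, NoDup_map_NoDup_ForallPairs; auto. }
  rewrite (sum_list_filter _ (Z.leb n0)). unfold lattice_bound.
  assert (sum_list (map (lattice_weight t) (filter (Z.leb n0) L))
          <= Rpower 2 s * (1 + 1 / (s - 1))).
  { apply Hside; [apply NoDup_filter; auto|].
    intros u v Hu Hv. rewrite filter_In, Z.leb_le in Hu, Hv. lia. }
  assert (sum_list (map (lattice_weight t) (filter (fun k => negb (Z.leb n0 k)) L))
          <= Rpower 2 s * (1 + 1 / (s - 1))).
  { apply Hside; [apply NoDup_filter; auto|].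
    intros u v Hu Hv. rewrite filter_In, Bool.negb_true_iff, Z.leb_gt in Hu, Hv. lia. }
  lra.
Qed.
End LatticeSums.

Fixpoint coord_product (f : nat -> Z -> R) (i0 : nat) (k : list Z) : R :=
  match k with
  | [] => 1
  | j :: k' => f i0 j * coord_product f (S i0) k'
  end.

Lemma coord_product_nonneg (f : nat -> Z -> R) (i0 : nat) (k : list Z) :
  (forall i j, 0 <= f i j) -> 0 <= coord_product f i0 k.
Proof.
  intros Hf. revert i0. induction k as [|j k IH]; intros i0; simpl; [lra|].
  apply Rmult_le_pos; auto.
Qed.

Lemma coord_product_ge_pow (f : nat -> Z -> R) (c : nat -> Z) (q : R) (n i0 : nat) :
  0 <= q -> (forall i, (i0 <= i < i0 + n)%nat -> q <= f i (c i)) ->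
  q ^ n <= coord_product f i0 (map c (seq i0 n)).
Proof.
  intros Hq. revert i0. induction n as [|n IH]; intros i0 Hf; simpl; [lra|].
  apply Rmult_le_compat; [exact Hq | apply pow_le; exact Hq | apply Hf; lia |].
  apply IH. intros i Hi. apply Hf. lia.
Qed.

Lemma coord_product_sum_le (f : nat -> Z -> R) (F : R) :
  (forall i j, 0 <= f i j) -> (forall i J, NoDup J -> sum_list (map (f i) J) <= F) ->
  forall n i0 K, NoDup K -> (forall k, In k K -> length k = n) ->
  sum_list (map (coord_product f i0) K) <= F ^ n.
Proof.
  intros Hf HF. assert (HF0 : 0 <= F) by (apply (HF 0%nat []), NoDup_nil).
  induction n as [|n IH]; intros i0 K HK Hlen.
  - apply Rle_trans with (sum_list (map (coord_product f i0) [[]])); [|simpl; lra].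
    apply sum_list_incl; auto; [|intros; apply coord_product_nonneg; auto].
    intros k Hk. specialize (Hlen k Hk). destruct k; [left; reflexivity | discriminate].
  - set (Ks := nodup Z.eq_dec (map (hd 0%Z) K)).
    rewrite (sum_by_fibers Z.eq_dec (hd 0%Z) _ Ks K); [| apply NoDup_nodup |].
    2: { intros k Hk. apply nodup_In, in_map. exact Hk. }
    apply Rle_trans with (sum_list (map (fun j => F ^ n * f i0 j) Ks)).
    + apply sum_list_le. intros j _.
      assert (Hcons : forall k, In k (fiber Z.eq_dec (hd 0%Z) K j) -> k = j :: tl k).
      { intros k Hk. apply In_fiber in Hk as [Hk <-].
        specialize (Hlen k Hk). destruct k; [discriminate | reflexivity]. }
      rewrite (sum_list_ext _ (fun k => f i0 j * coord_product f (S i0) (tl k))).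
      2: { intros k Hk. rewrite (Hcons k Hk) at 1. reflexivity. }
      rewrite sum_list_scal, <- (map_map (@tl Z)), Rmult_comm.
      apply Rmult_le_compat_r; [apply Hf|]. apply IH.
      * apply NoDup_map_NoDup_ForallPairs; [|apply fiber_NoDup; exact HK].
        intros k k' Hk Hk' Htl. rewrite (Hcons k Hk), (Hcons k' Hk'), Htl. reflexivity.
      * intros k' Hk'. apply in_map_iff in Hk' as (k & <- & Hk).
        apply In_fiber in Hk as [Hk _]. specialize (Hlen k Hk).
        destruct k; simpl in *; lia.
    + rewrite sum_list_scal. simpl. rewrite (Rmult_comm F).
      apply Rmult_le_compat_l; [apply pow_le; exact HF0|]. apply HF, NoDup_nodup.
Qed.

Definition sqnorm (d : nat) (v : point) : R :=
  sum_list (map (fun i => v i ^ 2) (seq 0 d)).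

Lemma sqnorm_nonneg (d : nat) (v : point) : 0 <= sqnorm d v.
Proof. apply sum_list_nonneg. intros. apply pow2_ge_0. Qed.

Lemma norm_nonneg (d : nat) (v : point) : 0 <= norm d v.
Proof. apply sqrt_pos. Qed.

Lemma norm_sq (d : nat) (v : point) : norm d v ^ 2 = sqnorm d v.
Proof. unfold norm. simpl. rewrite Rmult_1_r. apply sqrt_sqrt, sqnorm_nonneg. Qed.

Lemma coord_le_norm (d : nat) (v : point) (i : nat) : (i < d)%nat -> Rabs (v i) <= norm d v.
Proof.
  intros Hi. unfold norm. rewrite <- (sqrt_pow2 (Rabs (v i))) by apply Rabs_pos.
  apply sqrt_le_1_alt. rewrite pow2_abs.
  apply (sum_list_elem (fun i => v i ^ 2)); [apply in_seq; lia | intros; apply pow2_ge_0].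
Qed.

Lemma norm_le_of_coords (d : nat) (v : point) (h r : R) :
  0 <= h -> 0 <= r -> INR d * h ^ 2 <= r ^ 2 ->
  (forall i, (i < d)%nat -> Rabs (v i) <= h) -> norm d v <= r.
Proof.
  intros Hh Hr Hd Hv. unfold norm. rewrite <- (sqrt_pow2 r) by exact Hr.
  apply sqrt_le_1_alt.
  apply Rle_trans with (sum_list (map (fun _ => h ^ 2) (seq 0 d))).
  - apply sum_list_le. intros i Hi. apply in_seq in Hi.
    rewrite <- pow2_abs. apply pow_incr. split; [apply Rabs_pos | apply Hv; lia].
  - rewrite sum_list_const, length_seq. exact Hd.
Qed.

(* A (weak) Peetre inequality, enough to translate the weight [G]. *)
Lemma peetre_inequality (d : nat) (z y : point) :
  1 + norm d z <= 2 * (1 + norm d (psub z y)) * (1 + norm d y).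
Proof.
  pose proof (norm_nonneg d (psub z y)). pose proof (norm_nonneg d y).
  assert (Hsq : sqnorm d z <= 2 * sqnorm d (psub z y) + 2 * sqnorm d y).
  { unfold sqnorm. rewrite <- !sum_list_scal, <- sum_list_plus. apply sum_list_le.
    intros i _. unfold psub. pose proof (pow2_ge_0 (z i - 2 * y i)). nra. }
  rewrite <- !norm_sq in Hsq.
  assert (norm d z <= 1 + 2 * norm d (psub z y) + 2 * norm d y).
  { pose proof (norm_nonneg d z). nra. }
  nra.
Qed.

Lemma psub_in_Rd (d : nat) (x y : point) : in_Rd d x -> in_Rd d y -> in_Rd d (psub x y).
Proof. intros Hx Hy i Hi. unfold psub. rewrite Hx, Hy by exact Hi. ring. Qed.

Lemma Gfun_shift (d : nat) (eps : R) (z y : point) :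
  0 <= INR d + eps ->
  Gfun d eps (psub z y) <= Rpower (2 * (1 + norm d y)) (INR d + eps) * Gfun d eps z.
Proof.
  intros HD. unfold Gfun, Rpower. rewrite <- exp_plus. apply exp_le_compat.
  pose proof (peetre_inequality d z y). pose proof (norm_nonneg d z).
  pose proof (norm_nonneg d y). pose proof (norm_nonneg d (psub z y)).
  assert (ln (1 + norm d z) <= ln (1 + norm d (psub z y)) + ln (2 * (1 + norm d y))).
  { rewrite <- ln_mult by lra. apply ln_le_compat; lra. }
  nra.
Qed.

Lemma Int_part_bounds (r : R) : IZR (Int_part r) <= r < IZR (Int_part r) + 1.
Proof. destruct (base_Int_part r). lra. Qed.

Lemma same_Int_part_close (h u v : R) :
  0 < h -> Int_part (u / h) = Int_part (v / h) -> Rabs (u - v) <= h.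
Proof.
  intros Hh E. pose proof (Int_part_bounds (u / h)). pose proof (Int_part_bounds (v / h)).
  rewrite E in *. assert (Rabs (u / h - v / h) <= 1) by (apply Rabs_le; lra).
  replace (u - v) with (h * (u / h - v / h)) by (field; lra).
  rewrite Rabs_mult, Rabs_right by lra. nra.
Qed.

Lemma cell_distance_ge (h u v : R) :
  0 < h -> Rmin 1 h / 2 * (1 + Rabs (u / h - IZR (Int_part (v / h)))) <= 1 + Rabs (u - v).
Proof.
  intros Hh. pose proof (Int_part_bounds (v / h)) as Hv.
  set (k := IZR (Int_part (v / h))) in *. set (t := u / h). set (r := v / h) in *.
  replace (u - v) with (h * (t - r)) by (unfold t, r; field; lra).
  rewrite Rabs_mult, (Rabs_right h) by lra.
  set (m := Rmin 1 h). assert (m <= 1) by apply Rmin_l. assert (m <= h) by apply Rmin_r.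
  assert (0 < m) by (apply Rmin_glb_lt; lra).
  assert (Rabs (t - k) - 1 <= Rabs (t - r)).
  { pose proof (Rabs_triang (t - r) (r - k)). replace (t - r + (r - k)) with (t - k) in * by ring.
    assert (Rabs (r - k) <= 1) by (apply Rabs_le; lra). lra. }
  pose proof (Rabs_pos (t - r)). pose proof (Rabs_pos (t - k)).
  destruct (Rle_dec (Rabs (t - k)) 1).
  - assert (0 <= h * Rabs (t - r)) by nra. nra.
  - assert (m * (Rabs (t - k) - 1) <= h * Rabs (t - r)) by nra. nra.
Qed.

Section UniformBound.
Variables (d : nat) (eps : R) (a c phi : point -> R).
Variables (B alpha rho p : R).
Hypotheses (Heps : 0 < eps) (HB : 1 <= B) (Halpha : 0 < alpha) (Hrho : 0 < rho) (Hp : 0 <= p).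
Hypothesis Ha0 : forall x, in_Rd d x -> 0 <= a x.
Hypothesis HaG : forall x, in_Rd d x -> a x <= B * Gfun d eps x.
Hypothesis HphiG : forall x, in_Rd d x -> phi x <= B * Gfun d eps x.
Hypothesis Hsep : forall x, in_Rd d x -> norm d x <= rho -> alpha <= phi x.
Hypothesis Hcp : forall x, in_Rd d x -> c x <= p * phi x.

(* Side of the lattice cells: small enough that a cell has diameter [<= rho]. *)
Definition side : R := rho / (INR d + 1).

Definition cell (y : point) : list Z := map (fun i => Int_part (y i / side)) (seq 0 d).

Definition cell_mates (l : list point) (y : point) : list point :=
  fiber (list_eq_dec Z.eq_dec) cell l (cell y).

(* Decay exponent given to each coordinate: [> 1] and with [d] copies
   not exceeding the decay exponent [d + eps] of [G]. *)
Definition coord_exponent : R := 1 + eps / (INR d + 1).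

Definition cell_factor (x : point) (i : nat) (j : Z) : R :=
  Rpower (Rmin 1 side / 2) (- coord_exponent) * lattice_weight coord_exponent (x i / side) j.

Definition cell_factor_bound : R :=
  Rpower (Rmin 1 side / 2) (- coord_exponent) * lattice_bound coord_exponent.

Lemma dim_succ_pos : 0 < INR d + 1.
Proof. pose proof (pos_INR d). lra. Qed.

Lemma side_pos : 0 < side.
Proof. apply Rdiv_lt_0_compat; [exact Hrho | apply dim_succ_pos]. Qed.

Lemma coord_exponent_gt1 : 1 < coord_exponent.
Proof.
  unfold coord_exponent. pose proof (Rdiv_lt_0_compat _ _ Heps dim_succ_pos). lra.
Qed.

Lemma coord_exponent_total : INR d * coord_exponent <= INR d + eps.
Proof.
  unfold coord_exponent. pose proof dim_succ_pos. pose proof (pos_INR d).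
  replace (INR d * (1 + eps / (INR d + 1))) with (INR d + eps * (INR d / (INR d + 1)))
    by (field; lra).
  assert (INR d / (INR d + 1) <= 1).
  { apply (Rmult_le_reg_r (INR d + 1)); [lra|]. unfold Rdiv.
    rewrite Rmult_assoc, Rinv_l; lra. }
  nra.
Qed.

Lemma cell_factor_nonneg (x : point) (i : nat) (j : Z) : 0 <= cell_factor x i j.
Proof. apply Rmult_le_pos; [left; apply exp_pos | apply lattice_weight_nonneg]. Qed.

Lemma cell_factor_sum_le (x : point) (i : nat) (J : list Z) :
  NoDup J -> sum_list (map (cell_factor x i) J) <= cell_factor_bound.
Proof.
  intros HJ. unfold cell_factor, cell_factor_bound. rewrite sum_list_scal.
  apply Rmult_le_compat_l; [left; apply exp_pos|].
  apply lattice_sum_le; [apply coord_exponent_gt1 | exact HJ].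
Qed.

Lemma Gfun_le_cell_product (x y : point) :
  Gfun d eps (psub x y) <= coord_product (cell_factor x) 0 (cell y).
Proof.
  pose proof coord_exponent_gt1 as Hs. pose proof side_pos as Hside.
  set (s := coord_exponent) in *. set (N := norm d (psub x y)).
  pose proof (norm_nonneg d (psub x y)) as HN. fold N in HN.
  set (q := Rpower (1 + N) (- s)). assert (Hq : 0 < q) by apply exp_pos.
  apply Rle_trans with (q ^ d).
  - unfold q. rewrite <- Rpower_pow, Rpower_mult by exact Hq.
    unfold Gfun. fold N. apply Rle_Rpower; [lra|].
    pose proof coord_exponent_total as Htotal. fold s in Htotal. lra.
  - apply coord_product_ge_pow; [lra|]. intros i Hi.
    unfold cell_factor, lattice_weight. fold s.
    set (w := 1 + Rabs (x i / side - IZR (Int_part (y i / side)))).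
    assert (Hw : 0 < w) by (pose proof (Rabs_pos (x i / side - IZR (Int_part (y i / side)))); unfold w; lra).
    assert (Hm : 0 < Rmin 1 side / 2) by (pose proof (Rmin_glb_lt 1 side 0); lra).
    rewrite Rpower_mult_distr by assumption.
    apply Rpower_neg_antitone; [lra|]. split; [apply Rmult_lt_0_compat; assumption|].
    apply Rle_trans with (1 + Rabs (x i - y i)); [apply cell_distance_ge; exact Hside|].
    pose proof (coord_le_norm d (psub x y) i ltac:(lia)) as Hcoord. fold N in Hcoord.
    unfold psub in Hcoord. lra.
Qed.

(* Two points of the same cell are within distance [rho], hence repel. *)
Lemma same_cell_repel (z y : point) :
  in_Rd d z -> in_Rd d y -> cell z = cell y -> alpha <= phi (psub z y).
Proof.
  intros Hz Hy E. apply Hsep; [apply psub_in_Rd; auto|].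
  pose proof side_pos. pose proof dim_succ_pos. pose proof (pos_INR d).
  apply (norm_le_of_coords d _ side); try lra.
  - unfold side. replace ((rho / (INR d + 1)) ^ 2) with (rho ^ 2 / (INR d + 1) ^ 2)
      by (field; lra).
    assert (INR d / (INR d + 1) ^ 2 <= 1).
    { apply (Rmult_le_reg_r ((INR d + 1) ^ 2)); [nra|]. unfold Rdiv.
      rewrite Rmult_assoc, Rinv_l by nra. nra. }
    replace (INR d * (rho ^ 2 / (INR d + 1) ^ 2)) with (rho ^ 2 * (INR d / (INR d + 1) ^ 2))
      by (field; lra).
    pose proof (pow2_ge_0 rho). nra.
  - intros i Hi. unfold psub. apply same_Int_part_close; [exact side_pos|].
    apply (proj1 (map_ext_in_iff (l := seq 0 d)) E). apply in_seq. lia.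
Qed.

Definition punctured (eta : point -> Prop) (y : point) : point -> Prop :=
  fun z => eta z /\ z <> y.

Definition interaction (f : point -> R) (eta : point -> Prop) (y : point) : R :=
  set_sum (punctured eta y) (fun z => f (psub z y)).

(* In a tempered configuration the [phi]-interaction of each point is a
   genuine (bounded) sum, thanks to [phi <= B G] and the translation bound. *)
Lemma phi_interaction_bounded (eta : point -> Prop) (y : point) :
  tempered d eps eta -> eta y ->
  exists M, sum_le (punctured eta y) (fun z => phi (psub z y)) M.
Proof.
  intros [[Hpts _] [Mt HMt]] Hy.
  set (Ky := Rpower (2 * (1 + norm d y)) (INR d + eps)).
  assert (HKy : 0 <= Ky) by (left; apply exp_pos).
  exists (B * Ky * Mt). intros l Hl Hleta.
  apply Rle_trans with (sum_list (map (fun z => B * Ky * Gfun d eps z) l)).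
  - apply sum_list_le. intros z Hz. destruct (Hleta z Hz) as [Hz' _].
    eapply Rle_trans; [apply HphiG, psub_in_Rd; auto|].
    rewrite Rmult_assoc. apply Rmult_le_compat_l; [lra|].
    apply Gfun_shift. pose proof (pos_INR d). lra.
  - rewrite sum_list_scal. apply Rmult_le_compat_l; [nra|].
    apply HMt; [exact Hl | intros z Hz; apply Hleta; exact Hz].
Qed.

Lemma phi_interaction_nonneg (eta : point -> Prop) (y : point) :
  tempered d eps eta -> eta y -> 0 <= interaction phi eta y.
Proof.
  intros Heta Hy. destruct (phi_interaction_bounded eta y Heta Hy) as [M HM].
  exact (set_sum_nonneg _ _ _ HM).
Qed.

Lemma c_interaction_le (eta : point -> Prop) (y : point) :
  tempered d eps eta -> eta y -> interaction c eta y <= p * interaction phi eta y.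
Proof.
  intros Heta Hy. destruct (phi_interaction_bounded eta y Heta Hy) as [M HM].
  assert (Hpts : forall z, punctured eta y z -> in_Rd d (psub z y)).
  { intros z [Hz _]. destruct Heta as [[Hin _] _]. apply psub_in_Rd; auto. }
  assert (Hc : sum_le (punctured eta y) (fun z => c (psub z y)) (p * interaction phi eta y)).
  { intros l Hl Hleta.
    apply Rle_trans with (sum_list (map (fun z => p * phi (psub z y)) l)).
    - apply sum_list_le. intros z Hz. apply Hcp, Hpts, Hleta, Hz.
    - rewrite sum_list_scal. apply Rmult_le_compat_l; [exact Hp|].
      apply (set_sum_ge _ _ M); auto. }
  exact (set_sum_le _ _ _ _ Hc Hc).
Qed.

Lemma crowded_cell_interaction (eta : point -> Prop) (l : list point) (y : point) :
  tempered d eps eta -> NoDup l -> (forall z, In z l -> eta z) -> In y l ->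
  alpha * (INR (length (cell_mates l y)) - 1) <= interaction phi eta y.
Proof.
  intros Heta Hl Hleta Hy. pose proof Heta as [[Hpts _] _].
  destruct (phi_interaction_bounded eta y Heta (Hleta y Hy)) as [M HM].
  assert (Hyin : In y (cell_mates l y)) by (apply In_fiber; auto).
  pose proof (fiber_NoDup (list_eq_dec Z.eq_dec) cell l (cell y) Hl) as Hnd.
  fold (cell_mates l y) in Hnd.
  destruct (in_split _ _ Hyin) as (l1 & l2 & E). rewrite E in Hnd |- *.
  assert (Hothers : forall z, In z (l1 ++ l2) -> In z l /\ cell z = cell y /\ z <> y).
  { intros z Hz.
    assert (In z (cell_mates l y)) as Hz'.
    { rewrite E. apply in_app_or in Hz. apply in_or_app. simpl. tauto. }
    apply In_fiber in Hz' as [Hzl Hzc]. repeat split; auto.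
    intros ->. exact (NoDup_remove_2 _ _ _ Hnd Hz). }
  replace (INR (length (l1 ++ y :: l2)) - 1) with (INR (length (l1 ++ l2)))
    by (rewrite !length_app; simpl; rewrite Nat.add_succ_r, S_INR; ring).
  apply Rle_trans with (sum_list (map (fun z => phi (psub z y)) (l1 ++ l2))).
  - rewrite Rmult_comm, <- sum_list_const. apply sum_list_le.
    intros z Hz. destruct (Hothers z Hz) as (Hzl & Hzc & _).
    apply same_cell_repel; auto.
  - apply (set_sum_ge _ _ M); [exact HM | eapply NoDup_remove_1; eauto|].
    intros z Hz. destruct (Hothers z Hz) as (Hzl & _ & Hzy). split; auto.
Qed.

Lemma b_term_le_cell (x : point) (eta : point -> Prop) (l : list point) (y : point) :
  in_Rd d x -> tempered d eps eta -> NoDup l -> (forall z, In z l -> eta z) -> In y l ->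
  b_term a c phi eta x y
  <= 2 * (1 + p) * B * coord_product (cell_factor x) 0 (cell y)
     * exp (- (alpha * (INR (length (cell_mates l y)) - 1) / 2)).
Proof.
  intros Hx Heta Hl Hleta Hy. pose proof Heta as [[Hpts _] _].
  pose proof (Hleta y Hy) as Hey. pose proof (Hpts y Hey) as HyR.
  change (a (psub x y) * (1 + interaction c eta y) * exp (- interaction phi eta y)
          <= 2 * (1 + p) * B * coord_product (cell_factor x) 0 (cell y)
             * exp (- (alpha * (INR (length (cell_mates l y)) - 1) / 2))).
  rewrite (Rmult_assoc (2 * (1 + p)) B).
  apply damped_summand_le.
  - split; [apply Ha0, psub_in_Rd; auto|].
    eapply Rle_trans; [apply HaG, psub_in_Rd; auto|].
    apply Rmult_le_compat_l; [lra | apply Gfun_le_cell_product].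
  - exact Hp.
  - apply c_interaction_le; auto.
  - apply phi_interaction_nonneg; auto.
  - apply crowded_cell_interaction with (eta := eta); auto.
Qed.

Definition b_bound : R :=
  2 * (1 + p) * B * (1 + 2 / alpha) * cell_factor_bound ^ d.

(* Summing over cells: within a cell the repulsion caps the total weight
   by [1 + 2 / alpha]; over the cells the coordinate product sums to
   at most [cell_factor_bound ^ d]. *)
Lemma b_sum_le (x : point) (eta : point -> Prop) (l : list point) :
  in_Rd d x -> tempered d eps eta -> NoDup l -> (forall y, In y l -> eta y) ->
  sum_list (map (fun y => b_term a c phi eta x y) l) <= b_bound.
Proof.
  intros Hx Heta Hl Hleta.
  set (Cst := 2 * (1 + p) * B). assert (HCst : 0 <= Cst) by (unfold Cst; nra).
  set (P := coord_product (cell_factor x) 0).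
  assert (HP : forall k, 0 <= P k) by (intros; apply coord_product_nonneg, cell_factor_nonneg).
  set (E := fun n : nat => exp (- (alpha * (INR n - 1) / 2))).
  apply Rle_trans with
    (sum_list (map (fun y => Cst * P (cell y) * E (length (cell_mates l y))) l)).
  { apply sum_list_le. intros y Hy. apply b_term_le_cell; auto. }
  set (Ks := nodup (list_eq_dec Z.eq_dec) (map cell l)).
  rewrite (sum_by_fibers (list_eq_dec Z.eq_dec) cell _ Ks l); [| apply NoDup_nodup |].
  2: { intros y Hy. apply nodup_In, in_map. exact Hy. }
  apply Rle_trans with (sum_list (map (fun k => Cst * (1 + 2 / alpha) * P k) Ks)).
  - apply sum_list_le. intros k _.
    set (n := length (fiber (list_eq_dec Z.eq_dec) cell l k)).
    rewrite (sum_list_ext _ (fun _ => Cst * P k * E n)), sum_list_const.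
    2: { intros y Hy. apply In_fiber in Hy as [_ <-]. reflexivity. }
    pose proof (crowd_weight_le alpha n Halpha). fold (E n) in H.
    pose proof (HP k). change (INR n * (Cst * P k * E n) <= Cst * (1 + 2 / alpha) * P k).
    replace (INR n * (Cst * P k * E n)) with ((Cst * P k) * (INR n * E n)) by ring.
    replace (Cst * (1 + 2 / alpha) * P k) with ((Cst * P k) * (1 + 2 / alpha)) by ring.
    apply Rmult_le_compat_l; [apply Rmult_le_pos|]; auto.
  - rewrite sum_list_scal. unfold b_bound. fold Cst.
    apply Rmult_le_compat_l.
    + pose proof (Rdiv_lt_0_compat 2 alpha ltac:(lra) Halpha). nra.
    + apply coord_product_sum_le; [apply cell_factor_nonneg | apply cell_factor_sum_le
                                   | apply NoDup_nodup |].
      intros k Hk. apply nodup_In, in_map_iff in Hk as (y & <- & _).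
      unfold cell. rewrite length_map, length_seq. reflexivity.
Qed.
End UniformBound.

Theorem proposition3p2 (d : nat) (eps : R) (a c phi : point -> R)
  (Heps : 0 < eps)
  (Ha0 : forall x, in_Rd d x -> 0 <= a x)
  (Hc0 : forall x, in_Rd d x -> 0 <= c x)
  (Hphi0 : forall x, in_Rd d x -> 0 <= phi x)
  (B : R) (HB : 1 <= B)
  (HaG : forall x, in_Rd d x -> a x <= B * Gfun d eps x)
  (HphiG : forall x, in_Rd d x -> phi x <= B * Gfun d eps x)
  (alpha rho : R) (Halpha : 0 < alpha) (Hrho : 0 < rho)
  (Hsep : forall x, in_Rd d x -> norm d x <= rho -> alpha <= phi x)
  (p : R) (Hp : 0 <= p)
  (Hcp : forall x, in_Rd d x -> c x <= p * phi x) :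
  exists M : R, forall (x : point) (eta : point -> Prop),
    in_Rd d x -> tempered d eps eta ->
    sum_le eta (fun y => b_term a c phi eta x y) M.
Proof.
  exists (b_bound d eps B alpha rho p).
  intros x eta Hx Heta l Hl Hleta.
  exact (b_sum_le d eps a c phi B alpha rho p Heps HB Halpha Hrho Hp
           Ha0 HaG HphiG Hsep Hcp x eta l Hx Heta Hl Hleta).
Qed.
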